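(* Let $B$ be an object of $\mathsf{SquaMS}$, $p\ge0$, $n_0,\dots,n_{p-1},n'_0,\dots,n'_{p-1}\in N$ and $(r,s),(t,u)\in\{0,1\}^2$. Then the distance in $N^p\otimes B$ between $n_0\otimes\cdots\otimes n_{p-1}\otimes S_B((r,s))$ and $n'_0\otimes\cdots\otimes n'_{p-1}\otimes S_B((t,u))$ equals $\frac{h+v}{3^p}$, where $(h,v)$ are $3^p$ times the absolute differences of the $x$- and $y$-coordinates of the plane points $\sum_{k<p}n_k/3^{k+1}+(r,s)/3^p$ and $\sum_{k<p}n'_k/3^{k+1}+(t,u)/3^p$. In particular, writing $n_k=(i_k,j_k)$, $n'_k=(k_k,l_k)$, $$d_{N^p\otimes B}\big((i_0,j_0)\otimes\cdots\otimes(i_{p-1},j_{p-1})\otimes S_B((0,0)),(k_0,l_0)\otimes\cdots\otimes(k_{p-1},l_{p-1})\otimes S_B((0,0))\big)=\Big|\sum_{m=0}^{p-1}\frac{i_m-k_m}{3^{m+1}}\Big|+\Big|\sum_{m=0}^{p-1}\frac{j_m-l_m}{3^{m+1}}\Big|.$$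
   Context: Let $M_0=\{(r,s)\in[0,1]^2: r\in\{0,1\}\text{ or } s\in\{0,1\}\}$. A square metric space is a pair $(X,S_X)$ with $X$ a metric space with all distances at most $2$ and $S_X\colon M_0\to X$ injective such that (sq1) for $i\in\{0,1\}$, $r,s\in[0,1]$: $d_X(S_X(i,r),S_X(i,s))=|s-r|$ and $d_X(S_X(r,i),S_X(s,i))=|s-r|$; (sq2) $d_X(S_X(r,s),S_X(t,u))\ge|r-t|+|s-u|$; $\mathsf{SquaMS}$ is the category of these with short $S$-preserving maps. Let $N=\{0,1,2\}^2$, also viewed as points of $\mathbb{R}^2$. For $X$ in $\mathsf{SquaMS}$, $N\otimes X=(N\times X)/\!\sim$, where $\sim$ is generated by $(m,S_X(p))\sim(n,S_X(q))$ whenever $m,n\in N$ differ by exactly $1$ in exactly one coordinate and $(m+p)/3=(n+q)/3$; $n\otimes x$ is the class of $(n,x)$; the metric is the quotient of $d((a,u),(b,v))=\frac13 d_X(u,v)$ if $a=b$, $2$ otherwise (infimum over finite chains, $\sim$-related consecutive pairs counting $0$); $S_{N\otimes X}(q)=n\otimes S_X(3q-n)$ for $n\in N$ with $q\in(n+[0,1]^2)/3$. $N^0\otimes B=B$, $N^{p+1}\otimes B=N\otimes(N^p\otimes B)$, with elements written $n_0\otimes\cdots\otimes n_{p-1}\otimes b$. *)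

From HB Require Import structures.
From mathcomp Require Import all_boot all_order all_algebra.
From mathcomp Require Import boolp classical_sets reals.
Set Implicit Arguments. Unset Strict Implicit. Unset Printing Implicit Defensive.
Import Order.TTheory GRing.Theory Num.Theory.
Local Open Scope ring_scope.
Local Open Scope classical_set_scope.

Section Defs.
Variable R : realType.

Definition M0 (q : R * R) : Prop :=
  0 <= q.1 <= 1 /\ 0 <= q.2 <= 1 /\
  (q.1 = 0 \/ q.1 = 1 \/ q.2 = 0 \/ q.2 = 1).

Record SquaMS := {
  sq_car :> Type;
  sq_d : sq_car -> sq_car -> R;
  sq_S : R * R -> sq_car;
  sq_d_ge0 : forall x y, 0 <= sq_d x y;
  sq_d_eq0 : forall x y, sq_d x y = 0 <-> x = y;
  sq_d_sym : forall x y, sq_d x y = sq_d y x;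
  sq_d_tri : forall x y z, sq_d x z <= sq_d x y + sq_d y z;
  sq_d_le2 : forall x y, sq_d x y <= 2;
  sq_S_inj : forall p q, M0 p -> M0 q -> sq_S p = sq_S q -> p = q;
  sq1_v : forall (i : bool) (r s : R), 0 <= r <= 1 -> 0 <= s <= 1 ->
      sq_d (sq_S ((i:nat)%:R, r)) (sq_S ((i:nat)%:R, s)) = `|s - r|;
  sq1_h : forall (i : bool) (r s : R), 0 <= r <= 1 -> 0 <= s <= 1 ->
      sq_d (sq_S (r, (i:nat)%:R)) (sq_S (s, (i:nat)%:R)) = `|s - r|;
  sq2 : forall p q, M0 p -> M0 q ->
      `|p.1 - q.1| + `|p.2 - q.2| <= sq_d (sq_S p) (sq_S q)
}.

Definition N := ('I_3 * 'I_3)%type.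
Definition nR (i : 'I_3) : R := (i : nat)%:R.

Definition adjacent (m n : N) : Prop :=
  (`|nR m.1 - nR n.1| = 1 /\ m.2 = n.2) \/ (m.1 = n.1 /\ `|nR m.2 - nR n.2| = 1).

Section Tensor.
Variable Y : Type.
Variable dY : Y -> Y -> R.
Variable SY : R * R -> Y.

Definition glue (a b : N * Y) : Prop :=
  exists p q : R * R, M0 p /\ M0 q /\ a.2 = SY p /\ b.2 = SY q /\
    adjacent a.1 b.1 /\
    (nR a.1.1 + p.1) / 3 = (nR b.1.1 + q.1) / 3 /\
    (nR a.1.2 + p.2) / 3 = (nR b.1.2 + q.2) / 3.

Definition base (a b : N * Y) : R :=
  if a.1 == b.1 then dY a.2 b.2 / 3 else 2.

Inductive tchain : N * Y -> N * Y -> R -> Prop :=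
| tch_nil x : tchain x x 0
| tch_glue x y z w : (glue x y \/ glue y x) -> tchain y z w -> tchain x z w
| tch_step x y z w : tchain y z w -> tchain x z (base x y + w).

(* quotient distance (pulled back to representatives) *)
Definition tensor_dist (a b : N * Y) : R := inf [set w | tchain a b w].

(* choice of n in N with q in (n + [0,1]^2)/3 *)
Definition sel (x : R) : 'I_3 :=
  if 3 * x < 1 then @inord 2 0 else if 3 * x < 2 then @inord 2 1 else @inord 2 2.

Definition tensor_S (q : R * R) : N * Y :=
  let n := (sel q.1, sel q.2) in (n, SY (3 * q.1 - nR n.1, 3 * q.2 - nR n.2)).
End Tensor.

Section Iter.
Variable B : SquaMS.

(* carrier (representatives) of N^p (x) B *)
Fixpoint Tn (p : nat) : Type :=
  match p with 0 => sq_car B | p'.+1 => (N * Tn p')%type end.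

Fixpoint lvl (p : nat) : (Tn p -> Tn p -> R) * (R * R -> Tn p) :=
  match p return (Tn p -> Tn p -> R) * (R * R -> Tn p) with
  | 0 => (@sq_d B, @sq_S B)
  | p'.+1 => let dS := lvl p' in (tensor_dist dS.1 dS.2, tensor_S dS.2)
  end.

Definition dist_p (p : nat) : Tn p -> Tn p -> R := (lvl p).1.

Fixpoint embed (p : nat) (ns : nat -> N) (b : sq_car B) : Tn p :=
  match p return Tn p with
  | 0 => b
  | p'.+1 => (ns 0%N, embed p' (fun k => ns k.+1) b)
  end.
End Iter.

Definition plane_pt (p : nat) (ns : nat -> N) (r s : R) : R * R :=
  (\sum_(k < p) nR (ns k).1 / 3 ^+ k.+1 + r / 3 ^+ p,
   \sum_(k < p) nR (ns k).2 / 3 ^+ k.+1 + s / 3 ^+ p).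

End Defs.

From HB Require Import structures.
From mathcomp Require Import all_boot all_order all_algebra.
From mathcomp Require Import boolp classical_sets reals.
From mathcomp Require Import lra zify.
Import Order.TTheory GRing.Theory Num.Theory.
Set Implicit Arguments.
Unset Strict Implicit.
Unset Printing Implicit Defensive.
Local Open Scope ring_scope.
Local Open Scope classical_set_scope.

(* Both distances are compared with the l1 distance of plane positions, by
   induction on p; the class of n (x) x sits at (n + P)/3 when x sits at P.
   Lower bound: along any chain, a step inside one cell costs a third of the
   distance in X, which dominates a third of the l1 distance of the positions;
   glued points share their position; and a step between different cells costs
   2, the l1 diameter of the unit square.
   Upper bound, for points whose positions lie on the grid of mesh 3^-p (such as
   the images of the corners of the square): walk from cell to neighbouring cell
   towards the target, crossing each shared edge at a grid point that keeps both
   coordinates monotone.  Crossing costs nothing, and the pieces inside cells cost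
   their l1 length by induction, so the lengths add up to the l1 distance. *)

Section TensorDist.
Variables (R : realType) (Y : Type) (dY : Y -> Y -> R) (SY : R * R -> Y).
Hypothesis dY_ge0 : forall x y, 0 <= dY x y.

Local Notation tchain := (tchain dY SY).
Local Notation tdist := (tensor_dist dY SY).

Lemma base_ge0 a b : 0 <= base dY a b.
Proof. by rewrite /base; case: ifP => // _; rewrite divr_ge0. Qed.

Lemma tchain_ge0 a b w : tchain a b w -> 0 <= w.
Proof. by elim=> // x y z {}w _ w_ge0; rewrite addr_ge0 ?base_ge0. Qed.

Lemma tchain_cat a b c w1 w2 :
  tchain a b w1 -> tchain b c w2 -> tchain a c (w1 + w2).
Proof.
move=> ab; elim: ab w2 => [x|x y z w xy _ IH|x y z w _ IH] w2 bc.
- by rewrite add0r.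
- exact: tch_glue xy (IH _ bc).
- by rewrite -addrA; apply/tch_step/IH.
Qed.

Lemma tensor_dist_le a b w : tchain a b w -> tdist a b <= w.
Proof. by apply: ge_inf; exists 0 => v /tchain_ge0. Qed.

Lemma tensor_dist_ge a b x :
  (forall w, tchain a b w -> x <= w) -> x <= tdist a b.
Proof. by apply: lb_le_inf; exists (base dY a b + 0); apply/tch_step/tch_nil. Qed.

Lemma tensor_dist_ge0 a b : 0 <= tdist a b.
Proof. by apply: tensor_dist_ge => w /tchain_ge0. Qed.

Lemma tensor_distxx a : tdist a a = 0.
Proof. by apply/le_anti; rewrite tensor_dist_ge0 andbT tensor_dist_le //; apply: tch_nil. Qed.

Lemma tensor_dist_triangle a b c : tdist a c <= tdist a b + tdist b c.
Proof.
rewrite -lerBlDr; apply: tensor_dist_ge => w1 ab.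
rewrite lerBlDr addrC -lerBlDr; apply: tensor_dist_ge => w2 bc.
by rewrite lerBlDr addrC; apply/tensor_dist_le; exact: tchain_cat ab bc.
Qed.

Lemma tensor_dist_same_cell (n : N) x y : tdist (n, x) (n, y) <= dY x y / 3.
Proof.
have -> : dY x y / 3 = base dY (n, x) (n, y) + 0 by rewrite /base eqxx addr0.
by apply/tensor_dist_le/tch_step/tch_nil.
Qed.

Lemma tensor_dist_glue a b : glue SY a b -> tdist a b <= 0.
Proof. by move=> ab; apply/tensor_dist_le/tch_glue/tch_nil; left. Qed.
End TensorDist.

Section Plane.
Context {R : realType}.
Implicit Types (P Q G q : R * R) (x y : R).

Definition l1_dist P Q := `|P.1 - Q.1| + `|P.2 - Q.2|.
Definition unit_square : set (R * R) := [set P | 0 <= P.1 <= 1 /\ 0 <= P.2 <= 1].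
Definition corner : set (R * R) := [set P | exists r s : bool, P = (r%:R, s%:R)].
Definition cell_pt (n : N) P : R * R := ((nR R n.1 + P.1) / 3, (nR R n.2 + P.2) / 3).
Definition cell_dist (n m : N) : nat :=
  ((n.1 - m.1) + (m.1 - n.1) + (n.2 - m.2) + (m.2 - n.2))%N.
Definition on_grid (p : nat) x := exists k : nat, x * 3 ^+ p = k%:R.
Definition edge_pts P : set (R * R) :=
  [set e | exists b : bool, e = (b%:R, P.2) \/ e = (P.1, b%:R)].
Definition grid_pt (p : nat) : set (R * R) :=
  [set q | M0 q /\ on_grid p q.1 /\ on_grid p q.2].

Lemma nR_bounds (i : 'I_3) : 0 <= nR R i <= 2.
Proof. by rewrite /nR ler0n ler_nat -ltnS ltn_ord. Qed.

Lemma l1_dist_triangle P Q G : l1_dist P G <= l1_dist P Q + l1_dist Q G.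
Proof.
rewrite /l1_dist addrACA.
by apply: lerD; [rewrite -(subrKA Q.1) | rewrite -(subrKA Q.2)]; apply: ler_normD.
Qed.

Lemma l1_dist_le2 P Q : unit_square P -> unit_square Q -> l1_dist P Q <= 2.
Proof.
move=> [/andP[? ?] /andP[? ?]] [/andP[? ?] /andP[? ?]].
have : `|P.1 - Q.1| <= 1 by rewrite ler_norml; apply/andP; split; lra.
have : `|P.2 - Q.2| <= 1 by rewrite ler_norml; apply/andP; split; lra.
rewrite /l1_dist; lra.
Qed.

Lemma l1_dist_cell n P Q : l1_dist (cell_pt n P) (cell_pt n Q) = l1_dist P Q / 3.
Proof.
have shift a x y : (a + x) / 3 - (a + y) / 3 = (x - y) / 3 :> R by lra.
rewrite /l1_dist /cell_pt /= !shift !normrM mulrDl.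
by rewrite [`|3^-1|]ger0_norm // invr_ge0.
Qed.

Lemma cell_pt_unit_square n P : unit_square P -> unit_square (cell_pt n P).
Proof.
move=> [/andP[? ?] /andP[? ?]].
have /andP[? ?] := nR_bounds n.1; have /andP[? ?] := nR_bounds n.2.
by rewrite /cell_pt; split; apply/andP; split => /=; lra.
Qed.

Lemma M0_unit_square : @M0 R `<=` unit_square.
Proof. by move=> q [q1 [q2 _]]; split. Qed.

Lemma corner_M0 : corner `<=` @M0 R.
Proof. by move=> _ [[] [[] ->]]; rewrite /M0 /= ?ler01 ?lexx; do !split; auto. Qed.

Lemma corner_unit_square : corner `<=` unit_square.
Proof. by move=> q /corner_M0 /M0_unit_square. Qed.

Lemma edge_pts_M0 P e : unit_square P -> edge_pts P e -> M0 e.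
Proof. by move=> [P1 P2] [[] [->|->]]; rewrite /M0 /= ?ler01 ?lexx; do !split; auto. Qed.

Lemma normB_add x g y :
  (x <= g <= y) || (y <= g <= x) -> `|x - g| + `|g - y| = `|x - y|.
Proof.
case/orP => /andP[xg gy].
- by rewrite !ler0_norm ?subr_le0 ?(le_trans xg gy) //; lra.
- by rewrite !ger0_norm ?subr_ge0 ?(le_trans gy xg) //; lra.
Qed.

Lemma coord_step (i j : 'I_3) : i != j -> exists (i' : 'I_3) (e f : bool),
  [/\ `|nR R i - nR R i'| = 1, nR R i + e%:R = nR R i' + f%:R,
      ((i' - j) + (j - i') < (i - j) + (j - i))%N &
      forall x y, 0 <= x <= 1 -> 0 <= y <= 1 ->
        `|(nR R i + x) / 3 - (nR R i + e%:R) / 3|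
        + `|(nR R i + e%:R) / 3 - (nR R j + y) / 3|
        = `|(nR R i + x) / 3 - (nR R j + y) / 3|].
Proof.
case: i j => [i i3] [j j3]; rewrite neq_ltn /= => /orP[ij | ji].
- have i1 : (i.+1 < 3)%N by apply: leq_ltn_trans ij j3.
  have ij' : nR R (Ordinal i3) + 1 <= nR R (Ordinal j3) by rewrite /nR natr1 ler_nat.
  exists (Ordinal i1), true, false; split.
  + by rewrite /nR -[i.+1%:R]natr1 opprD addrA subrr add0r normrN normr1.
  + by rewrite /nR -[i.+1%:R]natr1 addr0.
  + rewrite /=; lia.
  + move=> x y /andP[? ?] /andP[? ?]; apply: normB_add.
    by apply/orP; left; apply/andP; split => /=; lra.
- have i1 : (i.-1 < 3)%N by apply: leq_ltn_trans (leq_pred i) i3.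
  have ei : (i.-1.+1 = i)%N by rewrite prednK // (leq_ltn_trans _ ji).
  have ji' : nR R (Ordinal j3) + 1 <= nR R (Ordinal i3) by rewrite /nR natr1 ler_nat.
  exists (Ordinal i1), false, true; split.
  + by rewrite /nR -[in i%:R]ei -[i.-1.+1%:R]natr1 addrAC subrr add0r normr1.
  + by rewrite /nR -[in i%:R]ei -[i.-1.+1%:R]natr1 addr0.
  + rewrite /=; lia.
  + move=> x y /andP[? ?] /andP[? ?]; apply: normB_add.
    by apply/orP; right; apply/andP; split => /=; lra.
Qed.

Lemma cell_step (n m : N) P Q : unit_square P -> unit_square Q -> n != m ->
  exists n' e f, [/\ adjacent R n n', cell_pt n e = cell_pt n' f,
    (cell_dist n' m < cell_dist n m)%N, edge_pts P e /\ edge_pts P f &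
    l1_dist (cell_pt n P) (cell_pt n e) + l1_dist (cell_pt n e) (cell_pt m Q)
    = l1_dist (cell_pt n P) (cell_pt m Q)].
Proof.
case: n m => [n1 n2] [m1 m2] [P1 P2] [Q1 Q2].
rewrite xpair_eqE negb_and => /orP[/coord_step [i [e [f [ni ef lt sum]]]]
                                  | /coord_step [j [e [f [nj ef lt sum]]]]].
- exists (i, n2), (e%:R, P.2), (f%:R, P.2); split.
  + by left.
  + by rewrite /cell_pt /= ef.
  + by rewrite /cell_dist /=; lia.
  + by split; [exists e | exists f]; left.
  + by rewrite /l1_dist /= addrACA sum // subrr normr0 add0r.
- exists (n1, j), (P.1, e%:R), (P.1, f%:R); split.
  + by right.
  + by rewrite /cell_pt /= ef.
  + by rewrite /cell_dist /=; lia.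
  + by split; [exists e | exists f]; right.
  + by rewrite /l1_dist /= addrACA sum // subrr normr0 add0r.
Qed.

(* [tensor_S SY q] is [(sel2 q, SY (rescale q))] by definition. *)
Definition sel2 q : N := (sel q.1, sel q.2).
Definition rescale q : R * R := (3 * q.1 - nR R (sel q.1), 3 * q.2 - nR R (sel q.2)).

Lemma cell_pt_rescale q : cell_pt (sel2 q) (rescale q) = q.
Proof. by case: q => x y; rewrite /cell_pt /=; congr pair; lra. Qed.

Lemma sel_rescale x : 0 <= x <= 1 -> [/\ 0 <= 3 * x - nR R (sel x) <= 1,
  x = 0 -> 3 * x - nR R (sel x) = 0 & x = 1 -> 3 * x - nR R (sel x) = 1].
Proof.
move=> /andP[x0 x1]; rewrite /sel /nR.
case: ifP => [lt1 | /negbT]; last case: ifP => [lt2 | /negbT]; rewrite -?leNgt inordK //.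
all: by split; [apply/andP; split | move=> ex | move=> ex]; lra.
Qed.

Lemma M0_rescale q : M0 q -> M0 (rescale q).
Proof.
move=> [q1 [q2 edge]].
have [r1 r1_0 r1_1] := sel_rescale q1; have [r2 r2_0 r2_1] := sel_rescale q2.
split=> //; split=> //=.
by case: edge => [/r1_0 | [/r1_1 | [/r2_0 | /r2_1]]]; auto.
Qed.

Lemma on_grid_bit p (b : bool) : on_grid p b%:R.
Proof. by exists (b * 3 ^ p)%N; rewrite natrM natrX. Qed.

Lemma on_grid0 x : 0 <= x <= 1 -> on_grid 0 x -> exists b : bool, x = b%:R.
Proof.
move=> /andP[x0 x1] [k]; rewrite expr0 mulr1 => xk; move: x1; rewrite xk lern1.
by case: k xk => [|[|]] // xk _; [exists false | exists true].
Qed.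

Lemma on_grid_cell p (i : 'I_3) x : on_grid p x -> on_grid p.+1 ((nR R i + x) / 3).
Proof.
move=> [k xk]; exists (i * 3 ^ p + k)%N.
by rewrite exprS mulrA divfK ?pnatr_eq0 // mulrDl xk natrD natrM natrX.
Qed.

Lemma on_grid_rescale p (i : 'I_3) x :
  0 <= 3 * x - nR R i -> on_grid p.+1 x -> on_grid p (3 * x - nR R i).
Proof.
move=> ge0 [k xk].
have e : (3 * x - nR R i) * 3 ^+ p = k%:R - (i * 3 ^ p)%N%:R.
  by rewrite mulrBl -mulrA mulrCA -exprS xk natrM natrX.
have le : (i * 3 ^ p <= k)%N.
  by rewrite -(ler_nat R) -subr_ge0 -e mulr_ge0 // exprn_ge0.
by exists (k - i * 3 ^ p)%N; rewrite e natrB.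
Qed.

Lemma grid_pt0_corner : grid_pt 0 `<=` corner.
Proof.
move=> q [[q1 [q2 _]] [/(on_grid0 q1) [r e1] /(on_grid0 q2) [s e2]]].
by exists r, s; rewrite -e1 -e2; case: q {q1 q2 e1 e2}.
Qed.

Lemma grid_pt_rescale p q : grid_pt p.+1 q -> grid_pt p (rescale q).
Proof.
move=> [Mq [g1 g2]]; have [/andP[r1 _] [/andP[r2 _] _]] := M0_rescale Mq.
by split; [exact: M0_rescale | split; apply: on_grid_rescale].
Qed.

Lemma plane_pt0 ns x y : plane_pt 0 ns x y = (x, y).
Proof. by rewrite /plane_pt !big_ord0 !add0r expr0 !divr1. Qed.

Lemma plane_pt_succ p ns x y :
  plane_pt p.+1 ns x y = cell_pt (ns 0%N) (plane_pt p (fun k => ns k.+1) x y).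
Proof.
rewrite /plane_pt /cell_pt /=; congr pair;
  rewrite big_ord_recl /= !mulrDl big_distrl /= expr1 -!addrA; congr (_ + (_ + _));
  rewrite ?exprS ?invfM -?mulrA ?[_^-1 * 3^-1]mulrC //; apply: eq_bigr => k _.
all: by rewrite exprS invfM -mulrA [_^-1 * 3^-1]mulrC.
Qed.
End Plane.

Definition lift (R : realType) (Y : Type) (C : Y -> R * R -> Prop) (y : N * Y) (P : R * R) :=
  exists2 P', C y.2 P' & P = cell_pt y.1 P'.

Section Lift.
Variables (R : realType) (Y : Type) (dY : Y -> Y -> R) (SY : R * R -> Y).
Variable C : Y -> R * R -> Prop.
Hypothesis dY_ge0 : forall x y, 0 <= dY x y.
Hypothesis C_unit_square : forall y P, C y P -> unit_square P.

Local Notation tdist := (tensor_dist dY SY).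

Lemma lift_unit_square a P : lift C a P -> unit_square P.
Proof. by move=> [P' /C_unit_square ? ->]; apply: cell_pt_unit_square. Qed.

Section LowerBound.
Hypothesis dYxx : forall x, dY x x = 0.
Hypothesis dY_triangle : forall x y z, dY x z <= dY x y + dY y z.
Hypothesis C_S : forall q, M0 q -> C (SY q) q.
Hypothesis C_l1_le : forall x y P Q, C x P -> C y Q -> l1_dist P Q <= dY x y.

Lemma lift_l1_le_same_cell a b P Q :
  lift C a P -> lift C b Q -> a.1 = b.1 -> l1_dist P Q <= dY a.2 b.2 / 3.
Proof.
move=> [P' aP' ->] [Q' bQ' ->] ->.
by rewrite l1_dist_cell ler_pM2r ?invr_gt0 //; apply: C_l1_le.
Qed.

Lemma glue_lift a b : glue SY a b -> exists G, lift C a G /\ lift C b G.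
Proof.
case: a b => [n x] [m y] [e [f [Me [Mf [/= -> [/= -> [_ [ef1 ef2]]]]]]]].
exists (cell_pt n e); split; first by exists e => //; apply: C_S.
by exists f; [apply: C_S | rewrite /cell_pt /= ef1 ef2].
Qed.

(* Measuring from a point x in the cell of the chain's first element means the
   intermediate points of the chain never need a position. *)
Lemma tchain_l1_le y z w : tchain dY SY y z w ->
  forall x Px Pz, lift C x Px -> lift C z Pz -> x.1 = y.1 ->
  l1_dist Px Pz <= dY x.2 y.2 / 3 + w.
Proof.
elim=> {y z w} [y | y y' z w yy' _ IH | y y' z w y'z IH] x Px Pz xPx zPz xy.
- by rewrite addr0; apply: lift_l1_le_same_cell.
- have [G [yG y'G]] : exists G, lift C y G /\ lift C y' G.
    by case: yy' => /glue_lift // [G [? ?]]; exists G.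
  have := IH _ _ _ y'G zPz erefl; rewrite dYxx mul0r add0r.
  have := lift_l1_le_same_cell xPx yG xy.
  have := l1_dist_triangle Px G Pz.
  lra.
- rewrite /base; case: eqP => [yy' | _].
  + apply: le_trans (IH _ _ _ xPx zPz (etrans xy yy')) _.
    by rewrite addrA lerD2r -mulrDl ler_pM2r ?invr_gt0.
  + have := l1_dist_le2 (lift_unit_square xPx) (lift_unit_square zPz).
    have := tchain_ge0 dY_ge0 y'z.
    have : 0 <= dY x.2 y.2 / 3 by rewrite divr_ge0.
    lra.
Qed.

Lemma tensor_dist_ge_l1 a b P Q : lift C a P -> lift C b Q -> l1_dist P Q <= tdist a b.
Proof.
move=> aP bQ; apply: tensor_dist_ge => w ab.
by have := tchain_l1_le ab aP bQ erefl; rewrite dYxx mul0r add0r.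
Qed.
End LowerBound.

Section UpperBound.
Hypothesis C_edge : forall y P e, C y P -> edge_pts P e -> C (SY e) e.
Hypothesis C_le_l1 : forall x y P Q, C x P -> C y Q -> dY x y <= l1_dist P Q.

Lemma tensor_dist_le_same_cell a b P Q :
  lift C a P -> lift C b Q -> a.1 = b.1 -> tdist a b <= l1_dist P Q.
Proof.
case: a b => [n x] [m y] [P' xP' ->] [Q' yQ' ->] /= <-.
apply: le_trans (tensor_dist_same_cell SY dY_ge0 n x y) _.
by rewrite l1_dist_cell ler_pM2r ?invr_gt0 //; apply: C_le_l1.
Qed.

Lemma tensor_dist_cross n n' x P' e f :
  C x P' -> C (SY e) e -> M0 e -> M0 f -> adjacent R n n' -> cell_pt n e = cell_pt n' f ->
  tdist (n, x) (n', SY f) <= l1_dist (cell_pt n P') (cell_pt n e).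
Proof.
move=> xP' eC Me Mf nn' ef.
apply: le_trans (tensor_dist_triangle SY dY_ge0 _ (n, SY e) _) _.
rewrite -[X in _ <= X]addr0; apply: lerD.
  by apply: tensor_dist_le_same_cell; [exists P' | exists e |].
apply: (tensor_dist_glue dY_ge0); exists e, f; move: ef; rewrite /cell_pt => -[ef1 ef2].
by do 6!(split; first by []).
Qed.

Lemma lift_step a b P Q : lift C a P -> lift C b Q -> a.1 != b.1 ->
  exists c G, [/\ (cell_dist c.1 b.1 < cell_dist a.1 b.1)%N, lift C c G,
                 tdist a c <= l1_dist P G & l1_dist P G + l1_dist G Q = l1_dist P Q].
Proof.
case: a b => [n x] [m y] [P' xP' ->] [Q' yQ' ->] /= nm.
have P'U := C_unit_square xP'.
have [n' [e [f [nn' ef lt [eP fP] sum]]]] := cell_step P'U (C_unit_square yQ') nm.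
exists (n', SY f), (cell_pt n e); split => //; first by exists f => //; apply: C_edge xP' fP.
exact: tensor_dist_cross xP' (C_edge xP' eP) (edge_pts_M0 P'U eP) (edge_pts_M0 P'U fP) nn' ef.
Qed.

Lemma tensor_dist_le_l1 a b P Q : lift C a P -> lift C b Q -> tdist a b <= l1_dist P Q.
Proof.
move: {2}(cell_dist a.1 b.1) (leqnn (cell_dist a.1 b.1)) => k.
elim: k a P => [|k IH] a P ab aP bQ; have [e | ne] := eqVneq a.1 b.1;
  try exact: tensor_dist_le_same_cell aP bQ e.
all: have [c [G [cb cG ac <-]]] := lift_step aP bQ ne.
  by have := leq_trans cb ab.
apply: le_trans (tensor_dist_triangle SY dY_ge0 a c b) _.
by apply: lerD ac (IH _ _ _ cG bQ); rewrite -ltnS (leq_trans cb ab).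
Qed.
End UpperBound.
End Lift.

Section Iterate.
Variables (R : realType) (B : SquaMS R).
Local Notation D p := (@dist_p R B p).
Local Notation S p := (lvl B p).2.

Fixpoint located (A : set (R * R)) (p : nat) : Tn B p -> R * R -> Prop :=
  match p return Tn B p -> R * R -> Prop with
  | 0 => fun z P => A P /\ z = sq_S B P
  | p'.+1 => lift (@located A p')
  end.
Arguments located : clear implicits.

Lemma located_embed (A : set (R * R)) p ns c :
  A c -> located A p (embed p ns (sq_S B c)) (plane_pt p ns c.1 c.2).
Proof.
move=> Ac; elim: p ns => [|p IH] ns; first by rewrite plane_pt0 -surjective_pairing; split.
by rewrite plane_pt_succ; exists (plane_pt p (fun k => ns k.+1) c.1 c.2); first exact: IH.
Qed.

Lemma located_unit_square (A : set (R * R)) p z P :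
  A `<=` unit_square -> located A p z P -> unit_square P.
Proof.
move=> AU; elim: p z P => [|p IH] z P; first by case=> /AU.
by move=> [P' /IH ? ->]; apply: cell_pt_unit_square.
Qed.

Lemma located_S (A : set (R * R)) (Ps : nat -> set (R * R)) :
  Ps 0 `<=` A -> (forall p q, Ps p.+1 q -> Ps p (rescale q)) ->
  forall p q, Ps p q -> located A p (S p q) q.
Proof.
move=> PsA Ps_rescale; elim=> [|p IH] q Psq; first by split; [apply: PsA |].
by exists (rescale q); [apply/IH/Ps_rescale | rewrite -[LHS]cell_pt_rescale].
Qed.

Lemma located_corner_grid p z P :
  located corner p z P -> on_grid p P.1 /\ on_grid p P.2.
Proof.
elim: p z P => [|p IH] z P; first by case=> -[r [s ->]] _; split; apply: on_grid_bit.
by move=> [P' /IH [g1 g2] ->]; split; apply: on_grid_cell.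
Qed.

Lemma located_corner_edge p y P e :
  located corner p y P -> edge_pts P e -> located corner p (S p e) e.
Proof.
move=> yP eP; apply: (located_S grid_pt0_corner (@grid_pt_rescale R)).
have [g1 g2] := located_corner_grid yP.
split; first exact: edge_pts_M0 (located_unit_square corner_unit_square yP) eP.
by case: eP => b [->|->]; split => //=; apply: on_grid_bit.
Qed.

Lemma dist_p_ge0 p x y : 0 <= D p x y.
Proof. by elim: p x y => [|p IH] x y; [apply: sq_d_ge0 | apply: (tensor_dist_ge0 _ IH)]. Qed.

Lemma dist_pxx p x : D p x x = 0.
Proof.
by case: p x => [|p] x; [apply/sq_d_eq0 | apply: (tensor_distxx _ (@dist_p_ge0 p))].
Qed.

Lemma dist_p_triangle p x y z : D p x z <= D p x y + D p y z.
Proof.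
case: p x y z => [|p] x y z; first exact: sq_d_tri.
exact: tensor_dist_triangle _ (@dist_p_ge0 p) _ _ _.
Qed.

Lemma dist_p_ge_l1 p x y P Q :
  located (@M0 R) p x P -> located (@M0 R) p y Q -> l1_dist P Q <= D p x y.
Proof.
elim: p x y P Q => [|p IH] x y P Q; first by move=> [MP ->] [MQ ->]; apply: sq2.
apply: (tensor_dist_ge_l1 (C := located (@M0 R) p) (@dist_p_ge0 p) _
  (@dist_pxx p) (@dist_p_triangle p)).
- by move=> z P'; apply: located_unit_square M0_unit_square.
- by move=> q; apply: (located_S (Ps := fun=> @M0 R)) => // ? ?; apply: M0_rescale.
- exact: IH.
Qed.

Lemma dist_p_le_l1 p x y P Q :
  located corner p x P -> located corner p y Q -> D p x y <= l1_dist P Q.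
Proof.
elim: p x y P Q => [|p IH] x y P Q.
  move=> [[r [s ->]] ->] [[t [u ->]] ->]; rewrite /l1_dist /= distrC [`|_ - u%:R|]distrC.
  have bit01 (b : bool) : 0 <= (b%:R : R) <= 1 by case: b; rewrite /= ?lexx ?ler01.
  apply: le_trans (sq_d_tri _ (sq_S B (t%:R, s%:R)) _) _.
  by rewrite (sq1_h _ s (bit01 r) (bit01 t)) (sq1_v _ t (bit01 s) (bit01 u)).
apply: (tensor_dist_le_l1 (C := located corner p) (@dist_p_ge0 p)).
- by move=> z P'; apply: located_unit_square corner_unit_square.
- by move=> z P' e; apply: located_corner_edge.
- exact: IH.
Qed.

Lemma dist_p_embed_corners p ns ns' c c' : corner c -> corner c' ->
  D p (embed p ns (sq_S B c)) (embed p ns' (sq_S B c'))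
  = l1_dist (plane_pt p ns c.1 c.2) (plane_pt p ns' c'.1 c'.2).
Proof.
move=> cc cc'; apply/le_anti/andP; split.
  by apply: dist_p_le_l1; apply: located_embed.
by apply: dist_p_ge_l1; apply: located_embed; apply: corner_M0.
Qed.
End Iterate.

Theorem mainTheorem13 (R : realType) (B : SquaMS R) (p : nat)
  (ns ns' : nat -> N) (r s t u : bool) :
  let P := @plane_pt R p ns (r:nat)%:R (s:nat)%:R in
  let Q := @plane_pt R p ns' (t:nat)%:R (u:nat)%:R in
  let h := 3 ^+ p * `|P.1 - Q.1| in
  let v := 3 ^+ p * `|P.2 - Q.2| in
  @dist_p R B p (@embed R B p ns (sq_S B ((r:nat)%:R, (s:nat)%:R)))
           (@embed R B p ns' (sq_S B ((t:nat)%:R, (u:nat)%:R)))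
  = (h + v) / 3 ^+ p.
Proof.
move=> P Q h v; rewrite dist_p_embed_corners; [|by exists r, s | by exists t, u].
by rewrite /h /v -mulrDr mulrC mulKf // expf_neq0 // pnatr_eq0.
Qed.
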